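(* Let $r>0$, let $n\ge \nu\ge 2$, and let $\hat\alpha\ne0$, $\hat\beta$, $\hat\gamma$ be real numbers. Let $X^{(0)}=(x^{(0)}(1),\dots,x^{(0)}(n))$ be a real sequence whose $r$-th accumulated sequence $X^{(r)}=X^{(0)}A^r$ satisfies $$x^{(r)}(k)=\left[x^{(0)}(1)-\frac{\hat\beta}{\hat\alpha}+\frac{\hat\beta}{\hat\alpha^2}-\frac{\hat\gamma}{\hat\alpha}\right]e^{-\hat\alpha(k-1)}+\frac{\hat\beta}{\hat\alpha}k-\frac{\hat\beta}{\hat\alpha^2}+\frac{\hat\gamma}{\hat\alpha},\quad k=2,\dots,n.$$ Let $(a,b,c)$ be the least-squares estimate $(a,b,c)^{\mathcal T}=(B^{\mathcal T}B)^{-1}B^{\mathcal T}Y$ computed from this sequence, and let $(\alpha,\beta,\gamma)$ be the FAGMO(1,1,$k$) parameters $$\alpha=\ln\frac{2+a}{2-a},\qquad \beta=\frac{b}{a}\ln\frac{2+a}{2-a},\qquad \gamma=\frac{\alpha c}{a}-\frac{\alpha b}{2a}+\frac{\beta}{\alpha}+\frac{\beta}{2}-\frac{\beta}{a}$$ (assuming all these quantities are well defined). Then $\alpha=\hat\alpha$, $\beta=\hat\beta$, $\gamma=\hat\gamma$, and the FAGMO(1,1,$k$) predicted values $\hat x^{(0)}(k)$, $k=1,\dots,n$, coincide with the given data $x^{(0)}(k)$.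
   Context: Notation: $A^r$ is the $n\times n$ upper triangular Toeplitz matrix with $(j,l)$ entry $\left[{}_{l-j}^{r}\right]$ for $l\ge j$, where $\left[{}_0^r\right]=1$ and $\left[{}_i^r\right]=\frac{r(r+1)\cdots(r+i-1)}{i!}$; $D^r=(A^r)^{-1}$ is the upper triangular Toeplitz matrix with entries $\left[{}_{l-j}^{-r}\right]$, $\left[{}_0^{-r}\right]=1$, $\left[{}_i^{-r}\right]=\frac{(-r)(-r+1)\cdots(-r+i-1)}{i!}$. Least squares: with $z^{(r)}(k)=\tfrac12(x^{(r)}(k-1)+x^{(r)}(k))$ and $x^{(r-1)}(k):=x^{(r)}(k)-x^{(r)}(k-1)$, $B$ is the $(\nu-1)\times 3$ matrix with rows $\big(-z^{(r)}(k),\ \tfrac{2k-1}{2},\ 1\big)$ and $Y$ the column vector with entries $x^{(r-1)}(k)$, $k=2,\dots,\nu$ ($\nu$ = number of samples used to build the model). FAGMO(1,1,$k$) prediction: $\hat x^{(r)}(1)=x^{(0)}(1)$ and for $k\ge2$, $\hat x^{(r)}(k)=\left[x^{(0)}(1)-\frac{\beta}{\alpha}+\frac{\beta}{\alpha^2}-\frac{\gamma}{\alpha}\right]e^{-\alpha(k-1)}+\frac{\beta}{\alpha}k-\frac{\beta}{\alpha^2}+\frac{\gamma}{\alpha}$; the predicted values are $(\hat x^{(0)}(1),\dots,\hat x^{(0)}(n))=(\hat x^{(r)}(1),\dots,\hat x^{(r)}(n))D^r$. *)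

From HB Require Import structures.
From mathcomp Require Import all_boot all_order all_algebra.
From mathcomp Require Import reals sequences exp.
Set Implicit Arguments. Unset Strict Implicit. Unset Printing Implicit Defensive.
Import Order.TTheory GRing.Theory Num.Theory.
Local Open Scope ring_scope.

Section FAGMO.
Variable R : realType.

Definition gbin (r : R) (i : nat) : R :=
  (\prod_(j < i) (r + j%:R)) / (i`!)%:R.

Definition Amat (n : nat) (r : R) : 'M[R]_n :=
  \matrix_(j < n, l < n) (if (j <= l)%N then gbin r (l - j) else 0).

Definition Dmat (n : nat) (r : R) : 'M[R]_n :=
  \matrix_(j < n, l < n) (if (j <= l)%N then gbin (- r) (l - j) else 0).

(* 1-based access to the entries of a row vector: x(k) for k = 1..n
   (returns 0 out of range; only used in range) *)
Definition ent (n : nat) (X : 'rV[R]_n) (k : nat) : R :=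
  if @insub nat (fun m => (m < n)%N) 'I_n k.-1 is Some i then X 0 i else 0.

Section LSE.
Variables (n nu : nat) (r : R) (X0 : 'rV[R]_n).

Definition Xacc : 'rV[R]_n := X0 *m Amat n r.

Definition zr (k : nat) : R := (ent Xacc k.-1 + ent Xacc k) / 2.

Definition xrm1 (k : nat) : R := ent Xacc k - ent Xacc k.-1.

Definition Bmat : 'M[R]_(nu.-1, 3) :=
  \matrix_(i < nu.-1, j < 3)
    (let k := (i + 2)%N in
     if val j == 0%N then - zr k
     else if val j == 1%N then ((2 * k)%:R - 1) / 2
     else 1).

Definition Yvec : 'cV[R]_(nu.-1) := \col_(i < nu.-1) xrm1 (i + 2)%N.

Definition abc : 'cV[R]_3 := invmx (Bmat^T *m Bmat) *m Bmat^T *m Yvec.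

Definition lse_a : R := abc (@Ordinal 3 0 isT) 0.
Definition lse_b : R := abc (@Ordinal 3 1 isT) 0.
Definition lse_c : R := abc (@Ordinal 3 2 isT) 0.

Definition fa_alpha : R := ln ((2 + lse_a) / (2 - lse_a)).
Definition fa_beta : R := lse_b / lse_a * ln ((2 + lse_a) / (2 - lse_a)).
Definition fa_gamma : R :=
  fa_alpha * lse_c / lse_a - fa_alpha * lse_b / (2 * lse_a)
  + fa_beta / fa_alpha + fa_beta / 2 - fa_beta / lse_a.

Definition xhat_r (k : nat) : R :=
  if k == 1%N then ent X0 1
  else (ent X0 1 - fa_beta / fa_alpha + fa_beta / fa_alpha ^+ 2
          - fa_gamma / fa_alpha) * expR (- fa_alpha * (k%:R - 1))
       + fa_beta / fa_alpha * k%:R - fa_beta / fa_alpha ^+ 2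
       + fa_gamma / fa_alpha.

Definition Xhat0 : 'rV[R]_n := (\row_(i < n) xhat_r i.+1) *m Dmat n r.

End LSE.
End FAGMO.

(* The FAGMO response k |-> x(k) = C e^(-alpha (k-1)) + (beta/alpha) k + D satisfies the
   grey difference equation x(k) - x(k-1) = -a z(k) + b (2k-1)/2 + c exactly, with
   a = 2 (e^alpha - 1)/(e^alpha + 1) and b, c explicit in alpha, beta, gamma.  Hence the
   least-squares system B (a,b,c)^T = Y is consistent and its solution is (a,b,c), from which
   the FAGMO parameter formulas recover alpha, beta, gamma since (2+a)/(2-a) = e^alpha.  The
   predicted accumulated sequence then equals X^(r) = X^(0) A^r, and D^r inverts A^r by the
   Chu-Vandermonde identity for generalized binomials. *)
From HB Require Import structures.
From mathcomp Require Import all_boot all_order all_algebra.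
From mathcomp Require Import reals sequences exp.
From mathcomp Require Import ring zify.
Import Order.TTheory GRing.Theory Num.Theory.
Set Implicit Arguments. Unset Strict Implicit.
Local Open Scope ring_scope.

Section UpperToeplitz.
Variable R : pzSemiRingType.

Definition toeplitz_ut n (f : nat -> R) : 'M[R]_n :=
  \matrix_(j < n, l < n) (if (j <= l)%N then f (l - j)%N else 0).

Lemma toeplitz_ut_mul n (f g : nat -> R) :
  toeplitz_ut n f *m toeplitz_ut n g =
  toeplitz_ut n (fun m => \sum_(i < m.+1) f i * g (m - i)%N).
Proof.
apply/matrixP => j l; rewrite !mxE.
pose F k := (if (j <= k)%N then f (k - j)%N else 0) *
            (if (k <= l)%N then g (l - k)%N else 0).
rewrite (eq_bigr (F \o val)) => [|k _]; last by rewrite !mxE.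
rewrite -(big_mkord xpredT F).
have [jl | lj] := leqP j l; last first.
  rewrite big1 // => k _; rewrite /F.
  by case: leqP => jk; [rewrite leqNgt (leq_trans lj jk) mulr0 | rewrite mul0r].
rewrite (big_cat_nat (n := j)) //= 1?ltnW //.
rewrite big1_seq => [|k]; last first.
  by rewrite mem_index_iota /F => /andP[_ /andP[_ /ltn_geF ->]]; rewrite mul0r.
rewrite add0r (big_cat_nat (n := l.+1) (leqW jl)) //=.
rewrite [X in _ + X]big1_seq => [|k]; last first.
  by rewrite mem_index_iota /F => /andP[_ /andP[/ltn_geF ->]]; rewrite mulr0.
rewrite addr0 -{1}(add0n j) big_addn subSn // big_mkord.
apply: eq_bigr => i _; rewrite /F leq_addl addnK.
have il : (i + j <= l)%N by have := ltn_ord i; lia.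
by rewrite il subnDA subnAC.
Qed.

End UpperToeplitz.

Section GeneralizedBinomial.
Variable R : realType.
Implicit Types (r s : R) (m : nat).

Lemma gbinr0 r : gbin r 0 = 1.
Proof. by rewrite /gbin big_ord0 divr1. Qed.

Lemma gbinS r m : gbin r m.+1 * m.+1%:R = (r + m%:R) * gbin r m.
Proof.
rewrite /gbin big_ord_recr /= factS natrM.
have fact_neq0 : (m`!)%:R != 0 :> R by rewrite pnatr_eq0 -lt0n fact_gt0.
by field; rewrite fact_neq0 nat1r pnatr_eq0.
Qed.

Lemma gbin0n m : gbin (0 : R) m = (m == 0%N)%:R.
Proof.
case: m => [|m]; first exact: gbinr0.
by rewrite /gbin big_ord_recl /= add0r mul0r mul0r.
Qed.

Lemma gbin_conv_recursion r s m :
  let c m := \sum_(i < m.+1) gbin r i * gbin s (m - i) in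
  c m.+1 * m.+1%:R = (r + s + m%:R) * c m.
Proof.
move=> c; rewrite /c mulr_suml.
have split_weight (i : 'I_m.+2) :
    gbin r i * gbin s (m.+1 - i) * m.+1%:R =
    gbin r i * i%:R * gbin s (m.+1 - i)
    + gbin r i * (gbin s (m.+1 - i) * (m.+1 - i)%:R).
  by rewrite natrB; [ring | rewrite -ltnS].
rewrite (eq_bigr _ (fun i _ => split_weight i)) big_split /=.
rewrite big_ord_recl /= mulr0 mul0r add0r.
rewrite [X in _ + X]big_ord_recr /= subnn mulr0 mulr0 addr0.
rewrite mulr_sumr -big_split; apply: eq_bigr => i _ /=.
have im : (i <= m)%N by rewrite -ltnS.
rewrite /bump /= add1n subSS subSn // !gbinS natrB //; ring.
Qed.

Lemma gbin_vandermonde r s m :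
  \sum_(i < m.+1) gbin r i * gbin s (m - i) = gbin (r + s) m.
Proof.
elim: m => [|m IH]; first by rewrite big_ord1 !gbinr0 mulr1.
have succ_neq0 : m.+1%:R != 0 :> R by rewrite pnatr_eq0.
apply: (mulIf succ_neq0).
by rewrite gbin_conv_recursion IH gbinS.
Qed.

Lemma mulmx_Amat_Dmat n r : Amat n r *m Dmat n r = 1%:M.
Proof.
rewrite [Amat n r]/Amat [Dmat n r]/Dmat -!/(toeplitz_ut n _) toeplitz_ut_mul.
apply/matrixP => j l; rewrite !mxE -val_eqE /=.
case: leqP => [jl | lj]; last by rewrite (gtn_eqF lj).
by rewrite gbin_vandermonde subrr gbin0n subn_eq0 eqn_leq jl.
Qed.

End GeneralizedBinomial.

Lemma lsq_exact (R : comUnitRingType) m p q (A : 'M[R]_(m, p))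
    (y : 'M[R]_(m, q)) (theta : 'M[R]_(p, q)) :
  A^T *m A \in unitmx -> A *m theta = y ->
  invmx (A^T *m A) *m A^T *m y = theta.
Proof.
by move=> AtA_unit <-; rewrite -mulmxA (mulmxA A^T) mulmxA mulVmx ?mul1mx.
Qed.

Section FagmoResponse.
Variable R : realType.
Implicit Types (al be ga : R) (k : nat).

Definition fagmo_seq (x1 : R) al be ga k : R :=
  (x1 - be / al + be / al ^+ 2 - ga / al) * expR (- al * (k%:R - 1))
  + be / al * k%:R - be / al ^+ 2 + ga / al.

Lemma fagmo_seq1 (x1 : R) al be ga : fagmo_seq x1 al be ga 1 = x1.
Proof. by rewrite /fagmo_seq subrr mulr0 expR0 mulr1; ring. Qed.

Definition grey_a al : R := 2 * (expR al - 1) / (expR al + 1).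
Definition grey_b al be : R := grey_a al * be / al.
Definition grey_c al be ga : R := be / al + grey_a al * (ga / al - be / al ^+ 2).
Definition grey_params al be ga : 'cV[R]_3 :=
  \col_(j < 3) [:: grey_a al; grey_b al be; grey_c al be ga]`_j.

Lemma expR_add1_neq0 al : expR al + 1 != 0.
Proof. by rewrite gt_eqF // addr_gt0 ?expR_gt0. Qed.

(* With e = e^alpha the exponential part E satisfies E(k-1) = e E(k), and
   a (e + 1) / 2 = e - 1 makes E cancel; the affine part then fixes b and c. *)
Lemma fagmo_seq_grey_eq (x1 : R) al be ga i : al != 0 ->
  let x := fagmo_seq x1 al be ga in
  x i.+2 - x i.+1 =
  - ((x i.+1 + x i.+2) / 2) * grey_a al
  + ((2 * i.+2)%:R - 1) / 2 * grey_b al be + grey_c al be ga.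
Proof.
move=> al_neq0 x; rewrite /x /fagmo_seq /grey_c /grey_b /grey_a.
have -> : expR (- al * (i.+1%:R - 1)) = expR (- al * (i.+2%:R - 1)) * expR al.
  by rewrite -expRD -!natr1; congr expR; ring.
move: (expR_add1_neq0 al); rewrite natrM -!natr1.
move: (expR al) (expR _) => e E e1_neq0.
by field; rewrite al_neq0 e1_neq0.
Qed.

Lemma grey_a_ratio al : (2 + grey_a al) / (2 - grey_a al) = expR al.
Proof.
have e1_neq0 := expR_add1_neq0 al.
rewrite /grey_a; field.
rewrite e1_neq0 (_ : 2 * (expR al + 1) - 2 * (expR al - 1) = 4); last by ring.
by rewrite pnatr_eq0.
Qed.

End FagmoResponse.

Lemma ent_ord (R : realType) n (X : 'rV[R]_n) (i : 'I_n) : ent X i.+1 = X 0 i.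
Proof. by rewrite /ent /= valK. Qed.

Section FagmoFit.
Variables (R : realType) (n nu : nat) (r : R) (X0 : 'rV[R]_n).

Lemma Xacc_ent1 : (0 < n)%N -> ent (Xacc r X0) 1 = ent X0 1.
Proof.
move=> n_gt0; pose i0 : 'I_n := Ordinal n_gt0.
rewrite (ent_ord _ i0) (ent_ord _ i0) /Xacc mxE (bigD1 i0) //= big1.
  by rewrite mxE leqnn subnn gbinr0 mulr1 addr0.
move=> l l_neq0; rewrite mxE leqn0 (_ : (l == 0%N :> nat) = false) ?mulr0 //.
by apply: contraNF l_neq0 => /eqP l0; apply/eqP/val_inj.
Qed.

Lemma Bmat_grey_fit al be ga : (nu <= n)%N -> al != 0 ->
  (forall k, (1 <= k <= n)%N ->
     ent (Xacc r X0) k = fagmo_seq (ent X0 1) al be ga k) ->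
  Bmat nu r X0 *m grey_params al be ga = Yvec nu r X0.
Proof.
move=> nu_le_n al_neq0 Xacc_fagmo.
apply/matrixP => i j; rewrite ord1 !mxE !big_ord_recl big_ord0 !mxE /=.
have i2_le_n : (i.+2 <= n)%N by have := ltn_ord i; lia.
rewrite addn2 /zr /xrm1 /= !Xacc_fagmo ?i2_le_n ?(ltnW i2_le_n) //.
by rewrite fagmo_seq_grey_eq // mul1r addr0 addrA.
Qed.

Lemma fa_params_grey al be ga : al != 0 ->
  abc nu r X0 = grey_params al be ga -> lse_a nu r X0 != 0 ->
  [/\ fa_alpha nu r X0 = al, fa_beta nu r X0 = be & fa_gamma nu r X0 = ga].
Proof.
move=> al_neq0 abc_grey; rewrite /lse_a abc_grey mxE /= => a_neq0.
have alpha_al : fa_alpha nu r X0 = al.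
  by rewrite /fa_alpha /lse_a abc_grey mxE /= grey_a_ratio expRK.
have beta_be : fa_beta nu r X0 = be.
  rewrite /fa_beta /lse_a /lse_b abc_grey !mxE /= grey_a_ratio expRK /grey_b.
  by field; rewrite al_neq0 a_neq0.
split => //; rewrite /fa_gamma alpha_al beta_be /lse_a /lse_b /lse_c.
rewrite abc_grey !mxE /= /grey_b /grey_c.
by field; rewrite al_neq0 a_neq0.
Qed.

Lemma Xhat0_Xacc :
  (forall k, (1 <= k <= n)%N -> xhat_r nu r X0 k = ent (Xacc r X0) k) ->
  Xhat0 nu r X0 = X0.
Proof.
move=> xhat_Xacc; rewrite /Xhat0.
have -> : \row_(i < n) xhat_r nu r X0 i.+1 = X0 *m Amat n r.
  by apply/rowP => i; rewrite mxE xhat_Xacc ?ltn_ord //; apply: ent_ord.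
by rewrite -mulmxA mulmx_Amat_Dmat mulmx1.
Qed.

End FagmoFit.

Theorem theorem4 (R : realType) (r : R) (n nu : nat) (ah bh gh : R)
  (X0 : 'rV[R]_n) :
  0 < r -> (2 <= nu)%N -> (nu <= n)%N -> ah != 0 ->
  (forall k : nat, (2 <= k <= n)%N ->
     ent (Xacc r X0) k =
       (ent X0 1 - bh / ah + bh / ah ^+ 2 - gh / ah) * expR (- ah * (k%:R - 1))
       + bh / ah * k%:R - bh / ah ^+ 2 + gh / ah) ->
  (* well-definedness of the estimates and of the FAGMO parameters *)
  (Bmat nu r X0)^T *m Bmat nu r X0 \in unitmx ->
  lse_a nu r X0 != 0 -> lse_a nu r X0 != 2 ->
  0 < (2 + lse_a nu r X0) / (2 - lse_a nu r X0) ->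
  fa_alpha nu r X0 != 0 ->
  [/\ fa_alpha nu r X0 = ah, fa_beta nu r X0 = bh, fa_gamma nu r X0 = gh
    & Xhat0 nu r X0 = X0].
Proof.
move=> _ _ nu_le_n ah_neq0 X_fagmo BtB_unit a_neq0 _ _ _.
have Xacc_fagmo k : (1 <= k <= n)%N ->
    ent (Xacc r X0) k = fagmo_seq (ent X0 1) ah bh gh k.
  case: k => [|[|k]] // k_le_n; last exact: X_fagmo.
  by rewrite Xacc_ent1 // fagmo_seq1.
have abc_grey : abc nu r X0 = grey_params ah bh gh.
  exact/lsq_exact/Bmat_grey_fit.
have [alpha_ah beta_bh gamma_gh] := fa_params_grey ah_neq0 abc_grey a_neq0.
split=> //; apply: Xhat0_Xacc => k k_range.
rewrite Xacc_fagmo // /xhat_r alpha_ah beta_bh gamma_gh.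
by case: eqP => // ->; rewrite fagmo_seq1.
Qed.
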